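(* Consider the contextual second-price pay-per-click auction problem described in the context, with a finite CTR predictor class $\mathcal{F}$ satisfying the realizability assumption. Run the exponential-weights algorithm described in the context with the IPS loss estimator and learning rate $\eta=\sqrt{\frac{\log|\mathcal{F}|}{\sum_{t=1}^T N_t}}$. Then $$\mathbb{E}[\mathrm{Reg}] = O\Big(\sqrt{\textstyle\sum_{t=1}^T N_t\log|\mathcal{F}|}\Big)=O\big(\sqrt{NT\log|\mathcal{F}|}\big),$$ where the $O(\cdot)$ hides only an absolute constant.
   Context: Notation: for a vector $v$, $\max_i v_i$ and $\mathrm{smax}_i v_i$ denote the largest and second-largest entries, and $\arg\max_i v_i$, $\arg\mathrm{smax}_i v_i$ their indices; ties are broken by an arbitrary fixed deterministic rule (so the ''second largest'' entry may equal the largest one in value). Problem: There are $T$ rounds. At each round $t$: (1) the learner observes a context $x_t$ in a context space $\mathcal{X}$ and a set of $N_t$ bidders (ads); $N=\max_t N_t$. (2) The learner chooses estimated CTRs $\tilde\rho_t\in[0,1]^{N_t}$. (3) Simultaneously each bidder $i$ chooses a bid $b_{t,i}\in[0,1]$ (contexts and bids may be chosen by an adaptive adversary; bids are chosen without knowing $\tilde\rho_t$). (4) The winner is $i_t=\arg\max_{i\in[N_t]} b_{t,i}\tilde\rho_{t,i}$, the runner-up is $j_t=\arg\mathrm{smax}_{i\in[N_t]} b_{t,i}\tilde\rho_{t,i}$, the payment per click is $d_t=b_{t,j_t}\tilde\rho_{t,j_t}/\tilde\rho_{t,i_t}$; the winner's ad is clicked with probability $\rho_{t,i_t}$, where $\rho_{t,i}\in[0,1]$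 is the true unknown CTR of ad $i$ at round $t$. (5) The learner observes all bids $b_t$ and $c_t\in\{0,1\}$, the click indicator (Bernoulli with mean $\rho_{t,i_t}$), and receives payment $c_td_t$. The regret is $\mathrm{Reg}=\sum_{t=1}^T \mathrm{smax}_{i\in[N_t]} b_{t,i}\rho_{t,i}-\sum_{t=1}^T c_td_t$. Realizability: the learner is given a class $\mathcal{F}$ of functions $f:\mathcal{X}\times[N]\to[0,1]$ containing an unknown $f^*$ with $f^*(x_t,i)=\rho_{t,i}$ for all $t,i$. Algorithm (exponential weights): with learning rate $\eta>0$, at each round $t$ sample $f_t$ from the distribution $q_t$ over $\mathcal{F}$ with $q_{t,f}\propto\exp(-\eta\sum_{s<t}\hat\ell_{s,f})$ (so $q_1$ is uniform); after observing $x_t$ set $\tilde\rho_{t,i}=f_t(x_t,i)$ for all $i\in[N_t]$, run the auction above, and then for every $f\in\mathcal{F}$ define the IPS loss estimator $$\hat\ell_{t,f}=\frac{\mathbb{1}\{i_t=\arg\max_{i\in[N_t]} b_{t,i}f(x_t,i)\}}{p_{t,i_t}}\Big(1-c_t\frac{\mathrm{smax}_{j\in[N_t]} b_{t,j}f(x_t,j)}{f(x_t,i_t)}\Big),$$ where $p_{t,i}=\Pr_{f_t\sim q_t}\{i_t=i\}$. *)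

From HB Require Import structures.
From mathcomp Require Import all_boot all_order all_algebra.
From mathcomp Require Import reals.
From mathcomp Require Import sequences.
From mathcomp.analysis Require Import exp.
Set Implicit Arguments. Unset Strict Implicit. Unset Printing Implicit Defensive.
Import Order.TTheory GRing.Theory Num.Theory.
Local Open Scope ring_scope.

(* A fixed deterministic tie-breaking rule: [amax n v] is an index of a
   largest entry of the vector (v 0, ..., v (n-1)), and [asmax n v] an index
   of a second-largest entry (the largest among the other indices); when
   n = 1 necessarily asmax = amax = 0.  The rule only looks at the first n
   entries. *)
Record TieRule (R : realType) := {
  amax : nat -> (nat -> R) -> nat;
  asmax : nat -> (nat -> R) -> nat;
  amax_lt : forall n v, (0 < n)%N -> (amax n v < n)%N;
  amax_max : forall n v i, (i < n)%N -> v i <= v (amax n v);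
  asmax_lt : forall n v, (0 < n)%N -> (asmax n v < n)%N;
  asmax_neq : forall n v, (1 < n)%N -> asmax n v != amax n v;
  asmax_max : forall n v i, (i < n)%N -> i != amax n v -> v i <= v (asmax n v);
  amax_ext : forall n v w, (forall i, (i < n)%N -> v i = w i) -> amax n v = amax n w;
  asmax_ext : forall n v w, (forall i, (i < n)%N -> v i = w i) -> asmax n v = asmax n w
}.

Section Auction.
Variables (R : realType) (X : Type) (K : finType).
(* the predictor class F, indexed by K: pred k x i = f_k(x, i) *)
Variables (pred : K -> X -> nat -> R) (kstar : K).
(* N t = number of bidders at round t (t = 0, ..., T-1) *)
Variables (N : nat -> nat) (rule : TieRule R) (eta : R).
(* adaptive adversary: context and bids chosen from the full past history
   (contexts, bids, sampled predictors, clicks); round index = size hist *)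
Definition hist_t := (X * (nat -> R) * K * bool)%type.
Variables (ctx : seq hist_t -> X) (bid : seq hist_t -> nat -> R).

Definition qw (L : K -> R) (k : K) : R :=
  expR (- (eta * L k)) / \sum_(k' : K) expR (- (eta * L k')).

Section Round.
Variable hist : seq hist_t.
Let x := ctx hist.
Let b := bid hist.
Let n := N (size hist).
Definition score (f : K) (i : nat) : R := b i * pred f x i.
Definition winner (f : K) : nat := amax rule n (score f).
Definition runner (f : K) : nat := asmax rule n (score f).
Definition secval (f : K) : R := score f (runner f).
Definition payment (k : K) : R := secval k / pred k x (winner k).
(* instantaneous regret: smax_i b_i rho_i - c d_t *)
Definition inst_regret (k : K) (c : bool) : R := secval kstar - c%:R * payment k.
Definition pwin (L : K -> R) (i : nat) : R :=
  \sum_(k : K | winner k == i) qw L k.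
Definition lhat (L : K -> R) (k : K) (c : bool) (f : K) : R :=
  (winner f == winner k)%:R / pwin L (winner k)
  * (1 - c%:R * secval f / pred f x (winner k)).
Definition click_prob (k : K) : R := pred kstar x (winner k).
Definition round_data (k : K) (c : bool) : hist_t := (x, b, k, c).
End Round.

Fixpoint exp_regret (m : nat) (hist : seq hist_t) (L : K -> R) : R :=
  match m with
  | 0 => 0
  | m'.+1 =>
      \sum_(k : K) qw L k *
        (click_prob hist k *
           (inst_regret hist k true +
            exp_regret m' (rcons hist (round_data hist k true))
              (fun f => L f + lhat hist L k true f))
         + (1 - click_prob hist k) *
           (inst_regret hist k false +
            exp_regret m' (rcons hist (round_data hist k false))
              (fun f => L f + lhat hist L k false f)))
  end.

Definition expected_regret (T : nat) : R := exp_regret T [::] (fun _ => 0).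
End Auction.

From HB Require Import structures.
From mathcomp Require Import all_boot all_order all_algebra.
From mathcomp Require Import reals.
From mathcomp Require Import sequences.
From mathcomp.analysis Require Import exp.
From mathcomp Require Import ring lra.
Set Implicit Arguments. Unset Strict Implicit. Unset Printing Implicit Defensive.
Import Order.TTheory GRing.Theory Num.Theory.
Local Open Scope ring_scope.

(* The IPS estimate of the
   loss ℓ_f = 1 - ρ_{i(f)} d(f) of a predictor f is unbiased, and
   realizability makes the expected revenue of f* equal to the benchmark
   smax_i b_i ρ_i; so the expected regret of a round is E[Σ_f q_f ℓ̂_f - ℓ̂_{f*}].
   The Hedge potential L_{f*} + ln(Σ_f exp(-η L_f))/η is nonnegative and, since
   exp(-y) <= 1 - y + y^2, it drops in each round by at least that quantity
   minus η Σ_f q_f ℓ̂_f^2, whose expectation is at most Σ_f q_f / p_{i(f)} <= N_t.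
   Telescoping, E[Reg] <= ln|F|/η + η Σ_t N_t = 2 sqrt(Σ_t N_t ln|F|).
   When |F| = 1 the learning rate is 0 and the potential argument breaks down,
   but then the learner always plays f* and suffers no regret. *)

Lemma expRN_le_quadratic (R : realType) (y : R) :
  0 <= y -> expR (- y) <= 1 - y + y ^+ 2.
Proof.
move=> y_ge0; have quad_ge0 : 0 <= 1 - y + y ^+ 2 by nra.
have le1 : 1 <= (1 - y + y ^+ 2) * expR y.
  apply: le_trans (_ : (1 - y + y ^+ 2) * (1 + y) <= _); last first.
    by rewrite ler_wpM2l // expR_ge1Dx.
  have : 0 <= y ^+ 3 by rewrite exprn_ge0.
  nra.
rewrite -[expR (- y)]mulr1; apply: le_trans (ler_wpM2l (ltW (expR_gt0 _)) le1) _.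
by rewrite mulrCA -expRD addNr expR0 mulr1.
Qed.

Section ExponentialWeights.
Variables (R : realType) (K : finType) (eta : R).

Local Notation q := (@qw R K eta).

Definition weight_sum (L : K -> R) : R := \sum_k expR (- (eta * L k)).

Lemma weight_sum_gt0 (k0 : K) L : 0 < weight_sum L.
Proof.
rewrite /weight_sum (bigD1 k0) //=; apply: (lt_le_trans (expR_gt0 (- (eta * L k0)))).
by rewrite lerDl sumr_ge0 // => k _; apply/ltW/expR_gt0.
Qed.

Lemma qw_gt0 L k : 0 < q L k.
Proof. by rewrite /qw divr_gt0 ?expR_gt0 // (weight_sum_gt0 k). Qed.

Lemma sum_qw (k0 : K) L : \sum_k q L k = 1.
Proof. by rewrite /qw -mulr_suml mulfV // gt_eqF // (weight_sum_gt0 k0). Qed.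

Lemma weight_sum_shift (k0 : K) L l :
  weight_sum (fun f => L f + l f)
  = weight_sum L * \sum_f q L f * expR (- (eta * l f)).
Proof.
have W_neq0 : weight_sum L != 0 by rewrite gt_eqF // (weight_sum_gt0 k0).
rewrite mulr_sumr; apply: eq_bigr => f _.
by rewrite mulrDr opprD expRD /qw -/(weight_sum L); field.
Qed.

Variable k0 : K.

Definition hedge_potential (L : K -> R) : R := L k0 + ln (weight_sum L) / eta.

Hypothesis eta_gt0 : 0 < eta.

Lemma hedge_potential_ge0 L : 0 <= hedge_potential L.
Proof.
have : expR (- (eta * L k0)) <= weight_sum L.
  by rewrite /weight_sum (bigD1 k0) //= lerDl sumr_ge0 // => k _; apply/ltW/expR_gt0.
rewrite -ler_ln ?posrE ?expR_gt0 ?(weight_sum_gt0 k0) // expRK => lnW_ge.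
have : - L k0 <= ln (weight_sum L) / eta by rewrite ler_pdivlMr // mulNr mulrC.
rewrite /hedge_potential; lra.
Qed.

(* Via [exp (-y) <= 1 - y + y^2] and [ln z <= z - 1]. *)
Lemma hedge_potential_step L l : (forall f, 0 <= l f) ->
  hedge_potential (fun f => L f + l f)
  <= hedge_potential L + (l k0 - \sum_f q L f * l f)
     + eta * \sum_f q L f * l f ^+ 2.
Proof.
move=> l_ge0; set z := \sum_f q L f * expR (- (eta * l f)).
set A := \sum_f q L f * l f; set B := \sum_f q L f * l f ^+ 2.
have z_gt0 : 0 < z.
  have := weight_sum_gt0 k0 (fun f => L f + l f).
  by rewrite (weight_sum_shift k0) pmulr_rgt0 // (weight_sum_gt0 k0).
have z_le : z <= 1 - eta * A + eta ^+ 2 * B.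
  have -> : 1 - eta * A + eta ^+ 2 * B
            = \sum_f q L f * (1 - eta * l f + (eta * l f) ^+ 2).
    rewrite -[1 in LHS](sum_qw k0 L) /A /B !mulr_sumr -sumrB -big_split /=.
    by apply: eq_bigr => f _; ring.
  apply: ler_sum => f _; apply: ler_wpM2l; first exact/ltW/qw_gt0.
  by rewrite expRN_le_quadratic // mulr_ge0 // ltW.
have ln_z : ln z <= z - 1.
  by have := @le_ln1Dx R (z - 1); rewrite subrKC; apply; lra.
have : ln z / eta <= - A + eta * B by rewrite ler_pdivrMr //; nra.
rewrite /hedge_potential /= (weight_sum_shift k0) lnM ?posrE ?(weight_sum_gt0 k0) // mulrDl.
lra.
Qed.

End ExponentialWeights.

Lemma tuned_rate_sum (R : rcfType) (a S : R) : 0 < a -> 0 < S ->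
  a / Num.sqrt (a / S) + Num.sqrt (a / S) * S = 2%:R * Num.sqrt (S * a).
Proof.
move=> a_gt0 S_gt0; set eta := Num.sqrt (a / S).
have eta_gt0 : 0 < eta by rewrite sqrtr_gt0 divr_gt0.
have eta2 : eta ^+ 2 = a / S by rewrite sqr_sqrtr // divr_ge0 // ltW.
have -> : Num.sqrt (S * a) = eta * S.
  have -> : S * a = (eta * S) ^+ 2 by rewrite exprMn eta2; field; rewrite gt_eqF.
  by rewrite sqrtr_sqr ger0_norm // mulr_ge0 // ltW.
have -> : a = eta ^+ 2 * S by rewrite eta2 divfK // gt_eqF.
by field; rewrite gt_eqF.
Qed.

Section Auction.
Variables (R : realType) (X : Type) (K : finType) (pred : K -> X -> nat -> R)
  (kstar : K) (N : nat -> nat) (rule : TieRule R)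
  (ctx : seq (hist_t R X K) -> X) (bid : seq (hist_t R X K) -> nat -> R) (eta : R).
Hypothesis pred01 : forall k x i, 0 <= pred k x i <= 1.
Hypothesis bid01 : forall h i, 0 <= bid h i <= 1.

Local Notation q := (@qw R K eta).
Local Notation win h := (winner pred N rule ctx bid h).
Local Notation sv h := (secval pred N rule ctx bid h).
Local Notation pay h := (payment pred N rule ctx bid h).
Local Notation cp h := (click_prob pred kstar N rule ctx bid h).
Local Notation pw h L := (pwin pred N rule eta ctx bid h L).
Local Notation lh h L := (lhat pred N rule eta ctx bid h L).
Local Notation ir h := (inst_regret pred kstar N rule ctx bid h).
Local Notation exp_regret := (exp_regret pred kstar N rule eta ctx bid).

Definition round_expect h L (F : K -> bool -> R) : R :=
  \sum_k q L k * (cp h k * F k true + (1 - cp h k) * F k false).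

Lemma exp_regretS m h L :
  exp_regret m.+1 h L
  = round_expect h L (fun k c => ir h k c
      + exp_regret m (rcons h (round_data ctx bid h k c)) (fun f => L f + lh h L k c f)).
Proof. by []. Qed.

Lemma round_expect_le {h L F G} : (forall k c, F k c <= G k c) ->
  round_expect h L F <= round_expect h L G.
Proof.
move=> FG; apply: ler_sum => k _; apply: ler_wpM2l; first exact/ltW/qw_gt0.
have /andP[cp_ge0 cp_le1] := pred01 kstar (ctx h) (win h k).
by apply: lerD; apply: ler_wpM2l; rewrite ?subr_ge0.
Qed.

Lemma round_expectD h L F G :
  round_expect h L (fun k c => F k c + G k c)
  = round_expect h L F + round_expect h L G.
Proof. by rewrite /round_expect -big_split; apply: eq_bigr => k _ /=; ring. Qed.

Lemma round_expectB h L F G :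
  round_expect h L (fun k c => F k c - G k c)
  = round_expect h L F - round_expect h L G.
Proof. by rewrite /round_expect -sumrB; apply: eq_bigr => k _ /=; ring. Qed.

Lemma round_expectZ h L a F :
  round_expect h L (fun k c => a * F k c) = a * round_expect h L F.
Proof. by rewrite /round_expect mulr_sumr; apply: eq_bigr => k _; ring. Qed.

Lemma round_expect_cst h L b : round_expect h L (fun _ _ => b) = b.
Proof.
rewrite -[b in RHS]mul1r -(sum_qw eta kstar L) mulr_suml.
by apply: eq_bigr => k _; ring.
Qed.

Lemma round_expect_sum {h L} {I : finType} (F : I -> K -> bool -> R) :
  round_expect h L (fun k c => \sum_i F i k c) = \sum_i round_expect h L (F i).
Proof.
rewrite /round_expect exchange_big /=; apply: eq_bigr => k _.
by rewrite !mulr_sumr -big_split mulr_sumr; apply: eq_bigr => i _ /=; ring.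
Qed.

Lemma round_expect_click_free h L (F : K -> R) :
  round_expect h L (fun k _ => F k) = \sum_k q L k * F k.
Proof. by apply: eq_bigr => k _; ring. Qed.

Section Round.
Variable h : seq (hist_t R X K).

Lemma pwinE L i : pw h L i = \sum_k (win h k == i)%:R * q L k.
Proof.
rewrite /pwin big_mkcond; apply: eq_bigr => k _.
by case: eqP; rewrite ?mul1r ?mul0r.
Qed.

Lemma pwin_winner_gt0 L f : 0 < pw h L (win h f).
Proof.
rewrite /pwin (bigD1 f) //=; apply: (lt_le_trans (qw_gt0 eta L f)).
by rewrite lerDl sumr_ge0 // => k _; apply/ltW/qw_gt0.
Qed.

Lemma lhatE L k c f :
  lh h L k c f = (win h f == win h k)%:R / pw h L (win h k) * (1 - c%:R * pay h f).
Proof.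
rewrite /lhat /payment; case: eqP => [->|_]; first by rewrite mulrA.
by rewrite !mul0r.
Qed.

Hypothesis bidders_gt0 : (0 < N (size h))%N.

Lemma secval_ge0 f : 0 <= sv h f.
Proof.
rewrite /secval /score; set i := runner _ _ _ _ _ _ _.
by apply: mulr_ge0; [case/andP: (bid01 h i) | case/andP: (pred01 f (ctx h) i)].
Qed.

Lemma secval_le_score f : sv h f <= bid h (win h f) * pred f (ctx h) (win h f).
Proof. by rewrite /secval /runner /winner; apply: amax_max; apply: asmax_lt. Qed.

Lemma payment_in01 f : 0 <= pay h f <= 1.
Proof.
rewrite /payment; set p := pred f (ctx h) (win h f).
have /andP[p_ge0 _] := pred01 f (ctx h) (win h f).
have [->|p_neq0] := eqVneq p 0; first by rewrite invr0 mulr0 lexx ler01.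
have p_gt0 : 0 < p by rewrite lt0r p_neq0.
rewrite divr_ge0 ?secval_ge0 //= ler_pdivrMr // mul1r.
apply: le_trans (secval_le_score f) _; rewrite -[leRHS]mul1r ler_wpM2r //.
by case/andP: (bid01 h (win h f)).
Qed.

(* Realizability: f* predicts the CTR of its own winner exactly. *)
Lemma click_prob_payment_star : cp h kstar * pay h kstar = sv h kstar.
Proof.
rewrite /payment /click_prob; set p := pred kstar (ctx h) (win h kstar).
have [p0|p_neq0] := eqVneq p 0; last by rewrite mulrCA mulfV ?mulr1.
rewrite p0 mul0r; apply/eqP; rewrite eq_le secval_ge0 /=.
by have := secval_le_score kstar; rewrite -/p p0 mulr0.
Qed.

Lemma loss_in01 (c : bool) f : 0 <= 1 - c%:R * pay h f <= 1.
Proof.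
have /andP[pay_ge0 pay_le1] := payment_in01 f.
by case: c => /=; rewrite ?mul1r ?mul0r; apply/andP; split; lra.
Qed.

Lemma lhat_ge0 L k c f : 0 <= lh h L k c f.
Proof.
rewrite lhatE mulr_ge0 ?divr_ge0 ?ler0n ?(ltW (pwin_winner_gt0 _ _)) //.
by case/andP: (loss_in01 c f).
Qed.

Lemma lhat_sqr_le L k c f :
  lh h L k c f ^+ 2 <= (win h f == win h k)%:R / pw h L (win h k) ^+ 2.
Proof.
rewrite lhatE; case: eqP => _; last by rewrite !mul0r expr0n.
have /andP[loss_ge0 loss_le1] := loss_in01 c f.
rewrite !div1r exprMn -exprVn ler_piMr ?expr_le1 //.
by rewrite exprn_ge0 // invr_ge0 ltW // pwin_winner_gt0.
Qed.

Lemma ips_unbiased L f :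
  round_expect h L (fun k c => lh h L k c f) = 1 - cp h f * pay h f.
Proof.
have pw_neq0 : pw h L (win h f) != 0 by rewrite gt_eqF // pwin_winner_gt0.
rewrite /round_expect; transitivity (\sum_k (win h k == win h f)%:R * q L k
    * ((1 - cp h f * pay h f) / pw h L (win h f))).
  apply: eq_bigr => k _; rewrite !lhatE.
  have [e|_] := eqVneq (win h k) (win h f); last by rewrite /=; ring.
  by rewrite /click_prob e /=; field.
by rewrite -mulr_suml -pwinE mulrC divfK.
Qed.

Lemma expect_inst_regret L :
  round_expect h L (fun k c => ir h k c) = sv h kstar - \sum_k q L k * (cp h k * pay h k).
Proof.
rewrite -[sv h kstar]mul1r -(sum_qw eta kstar L) mulr_suml -sumrB.
by apply: eq_bigr => k _; rewrite /inst_regret /=; ring.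
Qed.

Lemma expect_mixture_lhat L :
  round_expect h L (fun k c => \sum_f q L f * lh h L k c f)
  = 1 - \sum_f q L f * (cp h f * pay h f).
Proof.
rewrite (round_expect_sum (fun f k c => q L f * lh h L k c f)).
under eq_bigr => f _ do rewrite /= round_expectZ ips_unbiased.
by rewrite -[1 in RHS](sum_qw eta kstar L) -sumrB; apply: eq_bigr => f _; ring.
Qed.

(* Unbiasedness of the IPS estimates turns the expected regret into the
   expected regret of the weights q against f* on the estimated losses. *)
Lemma expect_inst_regret_ips L :
  round_expect h L (fun k c =>
    ir h k c + (lh h L k c kstar - \sum_f q L f * lh h L k c f)) = 0.
Proof.
rewrite round_expectD expect_inst_regret round_expectB ips_unbiased.
by rewrite expect_mixture_lhat -click_prob_payment_star; ring.
Qed.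

Lemma expect_inst_regret_single L : #|K| = 1%N -> round_expect h L (fun k c => ir h k c) = 0.
Proof.
move=> K1; have [k1 K_eq] := fintype1 K1.
have kE k : k = kstar by rewrite (K_eq k) (K_eq kstar).
rewrite expect_inst_regret (eq_bigr (fun k => q L k * (cp h kstar * pay h kstar))).
  by rewrite -mulr_suml (sum_qw eta kstar L) mul1r click_prob_payment_star subrr.
by move=> k _; rewrite (kE k).
Qed.

Lemma sum_qw_div_pwin L : \sum_k q L k / pw h L (win h k) <= (N (size h))%:R.
Proof.
set n := N (size h).
have -> : \sum_k q L k / pw h L (win h k)
          = \sum_k \sum_(i < n) (win h k == i)%:R * q L k / pw h L i.
  apply: eq_bigr => k _; have win_lt : (win h k < n)%N by apply: amax_lt.
  rewrite (bigD1 (Ordinal win_lt)) //= eqxx mul1r big1 ?addr0 // => i i_neq.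
  case: eqP => [win_eq|]; last by rewrite !mul0r.
  by move: i_neq; rewrite -val_eqE /= win_eq eqxx.
rewrite exchange_big /=.
apply: le_trans (_ : \sum_(i < n) (1 : R) <= _); last by rewrite sumr_const card_ord.
apply: ler_sum => i _; rewrite -mulr_suml -pwinE.
have [->|pw_neq0] := eqVneq (pw h L i) 0; first by rewrite mul0r ler01.
by rewrite mulfV.
Qed.

Lemma expect_ips_second_moment L :
  round_expect h L (fun k c => \sum_f q L f * lh h L k c f ^+ 2) <= (N (size h))%:R.
Proof.
have moment_le k c :
    \sum_f q L f * lh h L k c f ^+ 2 <= (pw h L (win h k))^-1.
  apply: le_trans (ler_sum _ (fun f _ => ler_wpM2l (ltW (qw_gt0 eta L f)) (lhat_sqr_le L k c f))) _.
  have pw_neq0 : pw h L (win h k) != 0 by rewrite gt_eqF // pwin_winner_gt0.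
  have -> : \sum_f q L f * ((win h f == win h k)%:R / pw h L (win h k) ^+ 2)
            = pw h L (win h k) / pw h L (win h k) ^+ 2.
    by rewrite pwinE mulr_suml; apply: eq_bigr => f _; ring.
  by rewrite expr2 invfM mulrA mulfV // mul1r.
apply: le_trans (round_expect_le moment_le) _.
by rewrite round_expect_click_free sum_qw_div_pwin.
Qed.

Hypothesis eta_gt0 : 0 < eta.

Lemma hedge_round_bound L :
  round_expect h L (fun k c =>
    ir h k c + hedge_potential eta kstar (fun f => L f + lh h L k c f))
  <= hedge_potential eta kstar L + eta * (N (size h))%:R.
Proof.
have step k c :
    ir h k c + hedge_potential eta kstar (fun f => L f + lh h L k c f)
    <= (ir h k c + (lh h L k c kstar - \sum_f q L f * lh h L k c f))
       + (eta * \sum_f q L f * lh h L k c f ^+ 2 + hedge_potential eta kstar L).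
  by have := hedge_potential_step kstar eta_gt0 L (lhat_ge0 L k c); lra.
apply: le_trans (round_expect_le step) _.
rewrite round_expectD expect_inst_regret_ips add0r round_expectD round_expectZ.
rewrite round_expect_cst addrC lerD2l.
by apply: ler_wpM2l; [exact: ltW | exact: expect_ips_second_moment].
Qed.

End Round.

Lemma exp_regret_le_potential (Phi : (K -> R) -> R) (B : nat -> R) :
  (forall L, 0 <= Phi L) ->
  (forall h L, (0 < N (size h))%N ->
    round_expect h L (fun k c => ir h k c + Phi (fun f => L f + lh h L k c f))
    <= Phi L + B (size h)) ->
  forall m h L, (forall j, (j < m)%N -> (0 < N (size h + j))%N) ->
  exp_regret m h L <= Phi L + \sum_(j < m) B (size h + j)%N.
Proof.
move=> Phi_ge0 Phi_round; elim=> [|m IH] h L N_gt0.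
  by rewrite big_ord0 addr0 Phi_ge0.
rewrite exp_regretS big_ord_recl addn0.
have -> : \sum_(j < m) B (size h + lift ord0 j)%N = \sum_(j < m) B ((size h).+1 + j)%N.
  by apply: eq_bigr => j _; rewrite lift0 addSnnS.
set rest := \sum_(j < m) _.
have step k c :
    ir h k c + exp_regret m (rcons h (round_data ctx bid h k c))
                 (fun f => L f + lh h L k c f)
    <= ir h k c + Phi (fun f => L f + lh h L k c f) + rest.
  rewrite -[leRHS]addrA lerD2l /rest -(size_rcons h (round_data ctx bid h k c)).
  by apply: IH => j j_lt; rewrite size_rcons addSnnS; apply: N_gt0.
apply: le_trans (round_expect_le step) _.
rewrite round_expectD round_expect_cst addrA lerD2r.
by apply: Phi_round; have := N_gt0 0%N isT; rewrite addn0.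
Qed.

Lemma expected_regret_single T :
  #|K| = 1%N -> (forall t, (t < T)%N -> (0 < N t)%N) ->
  expected_regret pred kstar N rule eta ctx bid T <= 0.
Proof.
move=> K1 N_gt0.
have := @exp_regret_le_potential (fun _ => 0) (fun _ => 0) (fun _ => lexx 0) _ T [::] (fun _ => 0) N_gt0.
rewrite big1 // !addr0; apply=> h L bidders_gt0.
by rewrite round_expectD round_expect_cst addr0 expect_inst_regret_single.
Qed.

Lemma expected_regret_hedge T :
  0 < eta -> (forall t, (t < T)%N -> (0 < N t)%N) ->
  expected_regret pred kstar N rule eta ctx bid T
  <= ln (#|K|%:R) / eta + eta * \sum_(t < T) (N t)%:R.
Proof.
move=> eta_gt0 N_gt0.
have := @exp_regret_le_potential (hedge_potential eta kstar) (fun t => eta * (N t)%:R)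
  (hedge_potential_ge0 kstar eta_gt0) (fun h L hN => hedge_round_bound hN eta_gt0 L)
  T [::] (fun _ => 0) N_gt0.
have -> : hedge_potential eta kstar (fun _ => 0) = ln (#|K|%:R) / eta.
  rewrite /hedge_potential /weight_sum add0r.
  by under eq_bigr do rewrite mulr0 oppr0 expR0; rewrite sumr_const.
by rewrite -mulr_sumr; apply.
Qed.

End Auction.

Theorem theorem1 :
  exists C : nat,
  forall (R : realType) (X : Type) (K : finType)
    (pred : K -> X -> nat -> R) (kstar : K)
    (T : nat) (N : nat -> nat) (rule : TieRule R)
    (ctx : seq (hist_t R X K) -> X) (bid : seq (hist_t R X K) -> nat -> R),
    injective pred ->
    (forall k x i, 0 <= pred k x i <= 1) ->
    (forall t, (t < T)%N -> (1 <= N t)%N) ->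
    (forall h i, 0 <= bid h i <= 1) ->
    let eta := Num.sqrt (ln (#|K|%:R : R) / \sum_(t < T) (N t)%:R) in
    expected_regret pred kstar N rule eta ctx bid T
      <= C%:R * Num.sqrt (\sum_(t < T) (N t)%:R * ln (#|K|%:R : R)).
Proof.
(* Realizability is built into the model (clicks follow [pred kstar]). *)
exists 2%N => R X K pred kstar T N rule ctx bid _ pred01 N_gt0 bid01.
cbv zeta; rewrite -mulr_suml.
have [->|T_gt0] := posnP T; first by rewrite big_ord0 mul0r sqrtr0 mulr0.
have S_gt0 : 0 < \sum_(t < T) (N t)%:R :> R.
  rewrite (bigD1 (Ordinal T_gt0)) //= ltr_pwDl ?sumr_ge0 //.
  by rewrite ltr0n N_gt0.
have K_gt0 : (0 < #|K|)%N by apply/card_gt0P; exists kstar.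
have [K_le1|K_gt1] := leqP #|K| 1.
  have K1 : #|K| = 1%N by apply/eqP; rewrite eqn_leq K_le1.
  apply: le_trans (expected_regret_single _ _ _ _ pred01 bid01 K1 N_gt0) _.
  by rewrite mulr_ge0 ?sqrtr_ge0.
have a_gt0 : 0 < ln (#|K|%:R : R) by rewrite ln_gt0 // ltr1n.
rewrite -tuned_rate_sum //; apply: expected_regret_hedge => //.
by rewrite sqrtr_gt0 divr_gt0.
Qed.
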